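(* Let $M$ be a discrete maximal torus of the Weyl group $W=W(D_5)$. Then the discrete Weyl group $N_W(M)/M$ is isomorphic to the dihedral group of order $8$.
   Context: A discrete maximal torus of a finite Coxeter group $W$ is an Abelian subgroup of maximal order among Abelian subgroups of $W$ which, among such subgroups, has the largest number of cyclic factors of order $4$ in its decomposition into cyclic groups of prime-power order (for $W(D_5)$ this is a subgroup isomorphic to $\mathbb{Z}_4\times\mathbb{Z}_4$). The discrete Weyl group of $W$ is $W(M)=N_W(M)/M$, where $N_W(M)$ is the normalizer of $M$ in $W$. *)

From HB Require Import structures.
From mathcomp Require Import all_boot all_order all_fingroup all_solvable.
Set Implicit Arguments. Unset Strict Implicit. Unset Printing Implicit Defensive.
Open Scope group_scope.

(* W(D_5) realised in its reflection representation, acting faithfully on the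
   10 vectors +-e_1,...,+-e_5.  Index i < 5 encodes e_(i+1), index i+5 encodes
   -e_(i+1).  Simple reflections:
     s_i  (i = 1..4) : e_i <-> e_(i+1)   (and -e_i <-> -e_(i+1))
     s_5            : e_4 <-> -e_5, e_5 <-> -e_4   (reflection in e_4 + e_5) *)
Definition pt (i : nat) : 'I_10 := inord i.
Definition sD (i : nat) : {perm 'I_10} := tperm (pt i) (pt i.+1) * tperm (pt (i + 5)) (pt (i + 6)).
Definition sD5 : {perm 'I_10} := tperm (pt 3) (pt 9) * tperm (pt 4) (pt 8).
Definition WD5 : {group {perm 'I_10}} :=
  <<[set sD 0; sD 1; sD 2; sD 3; sD5]>>%G.

(* Number of cyclic factors of order 4 in the decomposition of an abelian group
   A into cyclic groups of prime-power order: these are the factors of order 4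
   in the decomposition of its (unique) Sylow 2-subgroup 'O_2(A). *)
Definition num_Z4 (gT : finGroupType) (A : {set gT}) : nat :=
  count (pred1 4) (abelian_type 'O_2(A)).

Definition discrete_maximal_torus (gT : finGroupType) (W M : {group gT}) : Prop :=
  [/\ M \subset W, abelian M,
      (forall A : {group gT}, A \subset W -> abelian A -> #|A| <= #|M|) &
      (forall A : {group gT}, A \subset W -> abelian A -> #|A| = #|M| ->
         num_Z4 A <= num_Z4 M)].

From mathcomp Require Import all_boot all_order all_fingroup all_solvable zmodp zify.
Set Implicit Arguments. Unset Strict Implicit. Unset Printing Implicit Defensive.

(* Every element of W(D_5) commutes with the central involution -1, which has
   no fixed point among the ten vectors +-e_i and does not lie in W(D_5).  An
   abelian permutation group B that commutes with a fixed-point-free involution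
   i and moves only points of X satisfies |B|^2 <= 2^|X|: an orbit O of B has
   |O|^2 <= 2^|O u i(O)|, the stabiliser of a point of O fixes O u i(O)
   pointwise, and induction on |X| does the rest.  Applied to A x <-1> with
   |X| = 10 this bounds the abelian subgroups A of W(D_5) by 16.  The group
   M0 = <a0> x <b0> = Z_4 x Z_4 attains the bound, so a discrete maximal torus
   is Z_4 x Z_4, and a search through the 1920 elements of W(D_5) shows that
   every such subgroup is conjugate to M0.  Finally N_W(M0) has order 128 and
   contains two elements satisfying the dihedral relations of order 8 modulo
   M0. *)

Lemma order_pfactor (gT : finGroupType) (x : gT) p k : prime p ->
  x ^+ (p ^ k.+1) = 1 -> x ^+ (p ^ k) != 1 -> #[x] = (p ^ k.+1)%N.
Proof.
move=> pr_p xpk1 xpk; have : #[x] %| p ^ k.+1 by rewrite order_dvdn xpk1.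
case/(dvdn_pfactor _ _ pr_p) => j; rewrite leq_eqVlt => /orP[/eqP-> // | ltjk] oj.
by case/negP: xpk; rewrite -order_dvdn oj dvdn_exp2l.
Qed.

Lemma gen_sub_mulr_closed (gT : finGroupType) (S X : {set gT}) :
  1 \in X -> {in X & S, forall x s, x * s \in X} -> <<S>> \subset X.
Proof.
move=> X1 XS; apply/subsetP => _ /gen_prodgP[n [c Sc ->]].
elim: n c Sc => [|n IHn] c Sc; first by rewrite big_ord0.
by rewrite big_ord_recr XS //= (IHn (fun i => c (widen_ord _ i))).
Qed.

Lemma prod_count4_ge (s : seq nat) : all (fun m => 1 < m)%N s ->
  (4 ^ count_mem 4 s * 2 ^ (size s - count_mem 4 s) <= \prod_(m <- s) m)%N.
Proof.
elim: s => [|m s IHs] /=; first by rewrite big_nil.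
case/andP=> m_gt1 /IHs le_s; rewrite big_cons.
have [-> | _] /= := eqVneq m 4%N.
  by rewrite add1n subSS expnS -mulnA leq_mul2l.
by rewrite add0n subSn ?count_size // expnS mulnCA leq_mul.
Qed.

Lemma prod16_two_fours (s : seq nat) : all (fun m => 1 < m)%N s ->
  (\prod_(m <- s) m = 16)%N -> (2 <= count_mem 4 s)%N -> s = [:: 4; 4]%N.
Proof.
move=> s_gt1 prod16 c2; have := prod_count4_ge s_gt1; rewrite prod16.
have le_c := count_size (pred1 4%N) s.
move: c2 le_c; set c := count_mem 4 s => c2 le_c le16.
have c_eq2 : c = 2%N.
  apply/eqP; rewrite eqn_leq c2 andbT -(@leq_exp2l 4) //.
  by apply: leq_trans le16; rewrite leq_pmulr ?expn_gt0.
have sz2 : size s = 2%N.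
  move: le16; rewrite c_eq2 (_ : 16 = 4 ^ 2 * 2 ^ 0)%N // leq_pmul2l // leq_exp2l //.
  by rewrite leqn0 subn_eq0 => le_s; apply/eqP; rewrite eqn_leq le_s -c_eq2.
have /all_pred1P -> : all (pred1 4%N) s by rewrite all_count -/c c_eq2 sz2.
by rewrite sz2.
Qed.

Lemma abelian_Z4xZ4_structure (gT : finGroupType) (M : {group gT}) :
  abelian M -> #|M| = 16%N -> (2 <= num_Z4 M)%N ->
  exists x y, [/\ #[x] = 4%N, #[y] = 4%N & <[x]> \x <[y]> = M].
Proof.
move=> cM cardM; have pM : 2.-group M by rewrite /pgroup cardM.
rewrite /num_Z4 pcore_pgroup_id //; have [b defM typeM] := abelian_structure cM.
have prodb : (\prod_(m <- map order b) m = 16)%N.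
  by rewrite big_map -cardM -(bigdprod_card defM); apply: eq_bigr => x _; apply: orderE.
have b_gt1 : all (fun m => 1 < m)%N (map order b).
  by rewrite typeM abelian_type_gt1.
rewrite -typeM => /(prod16_two_fours b_gt1 prodb).
case: b defM {typeM prodb b_gt1} => [|x [|y []]] //= defM [ox oy]; exists x, y.
by rewrite !big_cons big_nil dprodg1 in defM.
Qed.

Lemma quotient_conj_isog (gT : finGroupType) (G H K L : {group gT}) g :
  H <| G -> G :^ g = K -> H :^ g = L -> G / H \isog K / L.
Proof.
move=> nsHG <- <-; have injq := injm_quotm nsHG (injm_conj G g).
have -> : G :^ g = conjgm G g @* G by rewrite morphim_conj setIid.
have -> : H :^ g = conjgm G g @* H by rewrite morphim_conj (setIidPr (normal_sub nsHG)).
by rewrite -morphim_quotm; apply: sub_isog.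
Qed.

Lemma quotient_isog_D8 (gT : finGroupType) (N K : {group gT}) (x y : gT) :
  K <| N -> #|N| = (8 * #|K|)%N -> x \in N -> y \in N ->
  x ^+ 4 \in K -> x ^+ 2 \notin K -> y ^+ 2 \in K -> x ^ y * x \in K ->
  (forall i, i < 4 -> y \notin K :* x ^+ i)%N -> N / K \isog 'D_8.
Proof.
move=> /andP[sKN nKN] cardN Nx Ny x4 x2 y2 xyx y_notin.
have nKx : x \in 'N(K) := subsetP nKN x Nx.
have nKy : y \in 'N(K) := subsetP nKN y Ny.
set X := coset K x; set Y := coset K y.
have cardQ : #|N / K| = 8%N.
  by rewrite card_quotient // -divgS // cardN mulnK.
have X4 : X ^+ 4 = 1 by rewrite -morphX //; apply: coset_id.
have X2 : X ^+ 2 != 1.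
  by apply: contra x2 => /eqP; rewrite -morphX // => /coset_idr; apply; rewrite groupX.
have Y2 : Y ^+ 2 = 1 by rewrite -morphX //; apply: coset_id.
have XY : X ^ Y = X^-1.
  rewrite -morphJ // -morphV //; apply/rcoset_kercosetP; rewrite ?groupJ ?groupV //.
  by rewrite mem_rcoset invgK.
have oX : #[X] = 4%N by apply: (@order_pfactor _ _ 2 1).
have Y_notin : Y \notin <[X]>.
  apply/cycleP => -[j eY]; have := y_notin (j %% 4)%N (ltn_pmod _ (isT : 0 < 4)%N).
  case/negP; apply/rcoset_kercosetP; rewrite ?groupX //.
  by rewrite morphX // -/X -oX expg_mod_order -eY.
apply/(isoGrpP _ (Grp_dihedral (isT : 1 < 4)%N)); split.
  by rewrite cardQ card_dihedral.
apply/existsP; exists (X, Y); rewrite /= !xpair_eqE /= X4 Y2 XY !eqxx !andbT.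
have sXQ : <[X]> <*> <[Y]> \subset N / K by rewrite join_subG !cycle_subG !mem_quotient.
rewrite eqEcard sXQ cardQ /=.
have ltX : (4 < #|<[X]> <*> <[Y]>|)%N.
  rewrite -oX orderE proper_card //; apply/properP; split; first exact: joing_subl.
  by exists Y; first by rewrite -cycle_subG joing_subr.
have [k ek] : exists k, #|<[X]> <*> <[Y]>| = (k * 4)%N.
  by apply/dvdnP; rewrite -oX orderE cardSg ?joing_subl.
by move: ltX; rewrite ek; case: k {ek} => [|[|k]].
Qed.

Lemma sq_le_pow2_double n : (n ^ 2 <= 2 ^ (n + n))%N.
Proof. by rewrite expnD -mulnn leq_mul // ltnW // ltn_expl. Qed.

Lemma sq_le_pow2_even n : ~~ odd n -> (n ^ 2 <= 2 ^ n)%N.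
Proof.
move=> evn; rewrite -[n]odd_double_half (negbTE evn) add0n -mul2n expnMn expnM.
elim: n./2 => // -[|k] IHk //; rewrite [in X in (_ <= X)%N]expnS.
by move: IHk; set q := (_ ^ k.+1)%N; nia.
Qed.

Section CentralisingInvolution.
Variables (T : finType) (i : {perm T}).
Hypotheses (i_fp : forall z, i z != z) (iK : involutive i).

Lemma even_card_involution_stable (O : {set T}) :
  {in O, forall z, i z \in O} -> ~~ odd #|O|.
Proof.
elim: {O}_.+1 {-2}O (ltnSn #|O|) => // n IHn O ltOn stO.
have [->|[z Oz]] := set_0Vmem O; first by rewrite cards0.
have sub2 : [set z; i z] \subset O by rewrite subUset !sub1set Oz stO.
have stO' : {in O :\: [set z; i z], forall w, i w \in O :\: [set z; i z]}.
  move=> w; rewrite !inE => /andP[/norP[/eqP wz /eqP wiz] Ow]; rewrite stO // andbT.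
  apply/norP; split; apply/eqP => e; first by apply: wiz; rewrite -e iK.
  exact: wz (perm_inj e).
have := cardsID [set z; i z] O; rewrite (setIidPr sub2) cards2 eq_sym i_fp => cardO.
rewrite -cardO /= addnC oddD /= addbF !negbK; apply: IHn stO'.
by move: ltOn; rewrite -cardO; lia.
Qed.

Lemma cent1_involutionC (b : {perm T}) z : b \in 'C[i] -> i (b z) = b (i z).
Proof. by move/cent1P => cbi; rewrite -!permM cbi. Qed.

Lemma orbit_cent_involutionE (B : {group {perm T}}) y :
  B \subset 'C[i] -> i @: orbit 'P B y = orbit 'P B (i y).
Proof.
move=> sBC; apply/setP => z; apply/imsetP/orbitP => [[_ /orbitP[b Bb <-] ->]|[b Bb <-]].
  by exists b; rewrite //= cent1_involutionC ?(subsetP sBC).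
by exists ('P%act y b); [apply: mem_orbit | rewrite /= cent1_involutionC ?(subsetP sBC)].
Qed.

Lemma card_orbit_cent_involution (B : {group {perm T}}) y : B \subset 'C[i] ->
  (#|orbit 'P B y| ^ 2 <= 2 ^ #|orbit 'P B y :|: i @: orbit 'P B y|)%N.
Proof.
move=> sBC; set O := orbit 'P B y; have iOE := orbit_cent_involutionE y sBC.
have [Oiy|Oiy] := boolP (i y \in O).
  have iO : {in O, forall z, i z \in O}.
    by move=> z Oz; rewrite /O -(orbit_eqP Oiy) -iOE imset_f.
  have -> : O :|: i @: O = O by apply/setUidPl/subsetP => _ /imsetP[z /iO Oz ->].
  exact/sq_le_pow2_even/even_card_involution_stable.
rewrite cardsU (card_imset _ perm_inj).
suff -> : O :&: i @: O = set0 by rewrite cards0 subn0 sq_le_pow2_double.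
apply/setP => z; rewrite !inE iOE; apply/negbTE; apply: contra Oiy => /andP[Oz Oiyz].
by rewrite -(orbit_transl y Oiyz).
Qed.

Lemma card_abelian_cent_involution (B : {group {perm T}}) (X : {set T}) :
  abelian B -> B \subset 'C[i] -> {in X, forall z, i z \in X} ->
  (forall b z, b \in B -> z \notin X -> b z = z) -> (#|B| ^ 2 <= 2 ^ #|X|)%N.
Proof.
elim: {X}_.+1 {-2}X (ltnSn #|X|) B => // n IHn X ltXn B cB sBC stX fixB.
have [X0|[y Xy]] := set_0Vmem X.
  suff -> : B :=: 1 by rewrite cards1 X0 cards0.
  apply/trivgP/subsetP => b Bb; rewrite inE; apply/eqP/permP => z.
  by rewrite perm1 fixB // X0 inE.
set O := orbit 'P B y; set S := 'C_B[y | 'P]; set U := O :|: i @: O.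
have sSB : S \subset B := subsetIl _ _.
have OX : O \subset X.
  apply/subsetP => _ /orbitP[b Bb <-] /=; rewrite apermE; apply: contraT => bXy.
  by have /perm_inj byy := fixB b _ Bb bXy; rewrite byy Xy in bXy.
have UX : U \subset X.
  by rewrite subUset OX; apply/subsetP => _ /imsetP[z /(subsetP OX) Xz ->]; apply: stX.
have SfixO s z : s \in S -> z \in O -> s z = z.
  case/setIP=> Bs /astab1P sy /orbitP[b Bb <-] /=; rewrite apermE.
  by rewrite -permM (centsP cB b Bb s Bs) permM; apply: congr1 sy.
have fixS s z : s \in S -> z \notin X :\: U -> s z = z.
  move=> Ss; rewrite inE negb_and negbK => /orP[/setUP[/(SfixO s z Ss)//|/imsetP[w Ow ->]]|].
    rewrite -cent1_involutionC ?(subsetP (subset_trans sSB sBC)) //.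
    by congr (i _); apply: SfixO.
  by apply: fixB; apply: (subsetP sSB).
have stXU : {in X :\: U, forall z, i z \in X :\: U}.
  move=> z; rewrite !inE => /andP[Uz Xz]; rewrite stX // andbT.
  apply: contra Uz => /orP[Oiz|/imsetP[w Ow /perm_inj ->]]; last by rewrite Ow.
  by apply/orP; right; apply/imsetP; exists (i z); rewrite ?iK.
have cardX := cardsID U X; rewrite (setIidPr UX) in cardX.
have ltXU : (#|X :\: U| < n)%N.
  have : (0 < #|U|)%N by apply/card_gt0P; exists y; rewrite inE orbit_refl.
  by move: ltXn; rewrite -cardX; lia.
have := IHn _ ltXU S (abelianS sSB cB) (subset_trans sSB sBC) stXU fixS.
rewrite -(card_orbit_stab 'P B y) -/O -/S -cardX expnD expnMn; apply: leq_mul.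
exact: card_orbit_cent_involution.
Qed.

End CentralisingInvolution.

(* A permutation s of 'I_10 is encoded by the list [:: s 0; ...; s 9], on which
   products and membership tests can be evaluated with vm_compute. *)
Definition lid : seq nat := iota 0 10.
Definition lmul (p q : seq nat) : seq nat := map (nth 0 q) p.
Definition lexp (p : seq nat) (n : nat) : seq nat := iter n (lmul^~ p) lid.
Definition is_lperm (p : seq nat) : bool :=
  [&& size p == 10, uniq p & all (fun k => k < 10) p].

Definition lperm (p : seq nat) : {perm 'I_10} :=
  insubd (1 : {perm 'I_10}) [ffun i : 'I_10 => inord (nth 0 p i) : 'I_10].
Definition lperms (L : seq (seq nat)) : {set {perm 'I_10}} := [set x | x \in map lperm L].

Lemma is_lperm_nth p k : is_lperm p -> k < 10 -> nth 0 p k < 10.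
Proof. by case/and3P=> /eqP sz _ /allP lt_p ltk; apply/lt_p/mem_nth; rewrite sz. Qed.

Lemma lpermE p i : is_lperm p -> lperm p i = inord (nth 0 p i).
Proof.
move=> lp_p; rewrite /lperm -pvalE insubdK ?ffunE //; apply/injectiveP => j k.
rewrite !ffunE => /(congr1 (@nat_of_ord 10)); rewrite !inordK ?is_lperm_nth // => ejk.
case/and3P: lp_p => /eqP sz up _; apply/eqP; rewrite -val_eqE /=.
by rewrite -(nth_uniq 0 _ _ up) ?sz // ejk.
Qed.

Lemma is_lperm_mul p q : is_lperm p -> is_lperm q -> is_lperm (lmul p q).
Proof.
move=> lp_p lp_q; have /and3P[/eqP szp up /allP ltp] := lp_p.
have /and3P[/eqP szq uq _] := lp_q.
rewrite /is_lperm size_map szp eqxx /=; apply/andP; split.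
  by rewrite map_inj_in_uniq // => j k /ltp ltj /ltp ltk /eqP; rewrite nth_uniq ?szq // => /eqP.
by apply/allP=> _ /mapP[k /ltp ltk ->]; apply: is_lperm_nth.
Qed.

Lemma lpermM p q : is_lperm p -> is_lperm q -> lperm (lmul p q) = lperm p * lperm q.
Proof.
move=> lp_p lp_q; apply/permP => i; rewrite permM !lpermE ?is_lperm_mul //.
have /and3P[/eqP szp _ _] := lp_p.
by rewrite (nth_map 0) ?szp // inordK ?is_lperm_nth.
Qed.

Lemma lperm_inj p q : is_lperm p -> is_lperm q -> lperm p = lperm q -> p = q.
Proof.
move=> lp_p lp_q epq; have /and3P[/eqP szp _ _] := lp_p; have /and3P[/eqP szq _ _] := lp_q.
apply: (@eq_from_nth _ 0) => [|k]; rewrite szp // => ltk.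
have /(congr1 (@nat_of_ord 10)) := congr1 (fun s : {perm 'I_10} => s (Ordinal ltk)) epq.
by rewrite !lpermE //= !inordK ?is_lperm_nth.
Qed.

Lemma lperm1 : lperm lid = 1.
Proof. by apply/permP => i; rewrite lpermE // perm1 nth_iota //= inord_val. Qed.

Lemma is_lperm_exp p n : is_lperm p -> is_lperm (lexp p n).
Proof. by move=> lp_p; elim: n => //= n IHn; apply: is_lperm_mul. Qed.

Lemma lpermX p n : is_lperm p -> lperm (lexp p n) = lperm p ^+ n.
Proof.
move=> lp_p; elim: n => [|n IHn] /=; first by rewrite lperm1.
by rewrite lpermM ?is_lperm_exp // IHn expgSr.
Qed.

Lemma lperm_eq1 p n : is_lperm p -> (lperm p ^+ n == 1) = (lexp p n == lid).
Proof.
move=> lp_p; rewrite -lpermX // -lperm1; apply/eqP/eqP => [|-> //].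
by apply: lperm_inj; rewrite ?is_lperm_exp.
Qed.

Lemma commute_lperm p q : is_lperm p -> is_lperm q -> lmul p q = lmul q p ->
  commute (lperm p) (lperm q).
Proof. by move=> lp_p lp_q epq; rewrite /commute -!lpermM; first congr lperm. Qed.

Lemma lpermsP L x : reflect (exists2 p, p \in L & x = lperm p) (x \in lperms L).
Proof. by rewrite inE; apply: mapP. Qed.

Lemma mem_lperms L p : all is_lperm L -> is_lperm p -> (lperm p \in lperms L) = (p \in L).
Proof.
move=> /allP lpL lp_p; apply/lpermsP/idP => [[q qL epq]|pL]; last by exists p.
by rewrite (lperm_inj lp_p (lpL q qL) epq).
Qed.

Lemma card_lperms L : all is_lperm L -> uniq L -> #|lperms L| = size L.
Proof.
move=> /allP lpL uL; rewrite cardsE (card_uniqP _) ?size_map //.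
by rewrite map_inj_in_uniq // => p q /lpL lp_p /lpL lp_q; apply: lperm_inj.
Qed.

Lemma mem_lcoset_lperms L p q : all is_lperm L -> is_lperm p -> is_lperm q ->
  (lperm q \in lperm p *: lperms L) = (q \in map (lmul p) L).
Proof.
move=> /allP lpL lp_p lp_q; apply/lcosetP/mapP => [[_ /lpermsP[r rL ->]]|[r rL ->]].
  have lp_r := lpL r rL; rewrite -lpermM // => /lperm_inj-> //; first by exists r.
  exact: is_lperm_mul.
by exists (lperm r); [apply/lpermsP; exists r | rewrite lpermM //; apply: lpL].
Qed.

Lemma mem_rcoset_lperms L p q : all is_lperm L -> is_lperm p -> is_lperm q ->
  (lperm q \in lperms L :* lperm p) = (q \in map (lmul^~ p) L).
Proof.
move=> /allP lpL lp_p lp_q; apply/rcosetP/mapP => [[_ /lpermsP[r rL ->]]|[r rL ->]].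
  have lp_r := lpL r rL; rewrite -lpermM // => /lperm_inj-> //; first by exists r.
  exact: is_lperm_mul.
by exists (lperm r); [apply/lpermsP; exists r | rewrite lpermM //; apply: lpL].
Qed.

Definition lgens : seq (seq nat) :=
  [:: [:: 1; 0; 2; 3; 4; 6; 5; 7; 8; 9]; [:: 0; 2; 1; 3; 4; 5; 7; 6; 8; 9];
      [:: 0; 1; 3; 2; 4; 5; 6; 8; 7; 9]; [:: 0; 1; 2; 4; 3; 5; 6; 7; 9; 8];
      [:: 0; 1; 2; 9; 8; 5; 6; 7; 4; 3]]%N.

Lemma is_lperm_gens : all is_lperm lgens. Proof. by []. Qed.

Lemma lgensE : map lperm lgens = [:: sD 0; sD 1; sD 2; sD 3; sD5].
Proof.
(* Unlike [inord], [inZp] reduces, so that [tperm] can be evaluated. *)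
have inordZ k : k < 10 -> (inord k : 'I_10) = inZp k.
  by move=> ltk; apply/val_inj; rewrite /= inordK // modn_small.
congr [:: _; _; _; _; _]; apply/permP => -[k ltk];
  do 10?[case: k ltk => [|k] ltk; first by
    rewrite lpermE // ?permM /sD /sD5 /pt !permE /= !inordZ //; apply/val_inj];
  by [].
Qed.

Lemma gens_WD5 g : g \in lgens -> lperm g \in WD5.
Proof.
move=> gl; apply: mem_gen; have : lperm g \in map lperm lgens by apply: map_f.
by rewrite lgensE !inE !orbA.
Qed.

Definition lkey (p : seq nat) : nat := (nth 0 p 0 * 10 + nth 0 p 1)%N.
Definition lbucket (B : seq (seq (seq nat))) (p : seq nat) : seq (seq nat) := nth [::] B (lkey p).

(* Breadth-first enumeration of the words in the generators; the visited
   elements are stored in buckets indexed by [lkey] to make lookups fast. *)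
Definition bfs_layer (seen : seq (seq (seq nat))) (front : seq (seq (seq nat) * seq nat)) :=
  foldl (fun st wp => foldl (fun st g =>
      let q := lmul wp.2 g in
      if q \in lbucket st.1 q then st
      else (set_nth [::] st.1 (lkey q) (q :: lbucket st.1 q), (rcons wp.1 g, q) :: st.2))
    st lgens) (seen, [::]) front.

Fixpoint bfs_words (fuel : nat) seen front : seq (seq (seq nat)) :=
  if fuel is fuel'.+1 then
    let: (seen', next) := bfs_layer seen front in map fst front ++ bfs_words fuel' seen' next
  else [::].

Definition lword (w : seq (seq nat)) : seq nat := foldl lmul lid w.

Definition Wwords : seq (seq (seq nat)) :=
  Eval vm_compute in bfs_words 30 (set_nth [::] [::] (lkey lid) [:: lid]) [:: ([::], lid)].

Definition Wlist : seq (seq nat) := map lword Wwords.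

Definition lbuckets (L : seq (seq nat)) : seq (seq (seq nat)) :=
  [seq [seq q <- L | lkey q == k] | k <- iota 0 100].

Lemma mem_lbucket L p : is_lperm p -> (p \in lbucket (lbuckets L) p) = (p \in L).
Proof.
move=> lp_p; have ltkey : lkey p < 100.
  have := is_lperm_nth lp_p (isT : 0 < 10); have := is_lperm_nth lp_p (isT : 1 < 10).
  by rewrite /lkey; lia.
by rewrite /lbucket (nth_map 0) ?size_iota // nth_iota // mem_filter eqxx.
Qed.

(* The [let] makes vm_compute build the buckets only once. *)
Lemma Wlist_closed : let B := lbuckets Wlist in
  all (fun p => all (fun g => lmul p g \in lbucket B (lmul p g)) lgens) Wlist.
Proof. by vm_compute. Qed.

Lemma is_lperm_Wlist : all is_lperm Wlist. Proof. by vm_compute. Qed.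

Lemma uniq_Wlist : uniq Wlist. Proof. by vm_compute. Qed.

Lemma lword_WD5 w : all (mem lgens) w -> is_lperm (lword w) /\ lperm (lword w) \in WD5.
Proof.
rewrite /lword; elim/last_ind: w => [|w g IHw]; first by rewrite /= lperm1 group1.
rewrite all_rcons foldl_rcons => /andP[gl /IHw[lp_w Ww]].
have lp_g : is_lperm g := allP is_lperm_gens g gl.
by split; [exact: is_lperm_mul | rewrite lpermM // groupM // gens_WD5].
Qed.

Lemma Wwords_gens : all (all (mem lgens)) Wwords. Proof. by vm_compute. Qed.

Lemma WD5E : (WD5 : {set {perm 'I_10}}) = lperms Wlist.
Proof.
apply/eqP; rewrite eqEsubset; apply/andP; split.
  apply: gen_sub_mulr_closed => [|_ s /lpermsP[p pW ->] Ss].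
    by rewrite -lperm1 mem_lperms ?is_lperm_Wlist //; vm_compute.
  have : s \in map lperm lgens by rewrite lgensE; move: Ss; rewrite !inE !orbA.
  case/mapP=> g gl ->; have lp_p := allP is_lperm_Wlist p pW.
  have lp_g := allP is_lperm_gens g gl; have lp_pg := is_lperm_mul lp_p lp_g.
  rewrite -lpermM // mem_lperms ?is_lperm_Wlist // -mem_lbucket //.
  exact: allP (allP Wlist_closed p pW) g gl.
apply/subsetP => _ /lpermsP[_ /mapP[w wW ->] ->].
by case: (lword_WD5 (allP Wwords_gens w wW)).
Qed.

(* The central element -1 of the hyperoctahedral group; it does not lie in
   W(D_5) because 5 is odd. *)
Definition neg1L : seq nat := [:: 5; 6; 7; 8; 9; 0; 1; 2; 3; 4]%N.
Definition neg1 : {perm 'I_10} := lperm neg1L.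

Lemma is_lperm_neg1 : is_lperm neg1L. Proof. by []. Qed.

Lemma neg1_fixfree z : neg1 z != z.
Proof. by rewrite lpermE // -val_eqE /= inordK ?is_lperm_nth //; case: z; do 11?case. Qed.

Lemma neg1_sqr : neg1 * neg1 = 1.
Proof. by rewrite -lpermM -?lperm1. Qed.

Lemma neg1K : involutive neg1.
Proof. by move=> z; rewrite -permM neg1_sqr perm1. Qed.

Lemma order_neg1 : #[neg1] = 2%N.
Proof.
apply: (@order_pfactor _ _ 2 0) => //; first by rewrite expgS expg1 neg1_sqr.
apply/eqP => /(congr1 (fun s : {perm 'I_10} => s ord0)) /eqP.
by rewrite perm1 (negbTE (neg1_fixfree _)).
Qed.

Lemma WD5_cent_neg1 : WD5 \subset 'C[neg1].
Proof.
have comm_neg1 : all (fun p => lmul p neg1L == lmul neg1L p) Wlist by vm_compute.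
apply/subsetP => x; rewrite WD5E => /lpermsP[p pW ->]; have lp_p := allP is_lperm_Wlist p pW.
rewrite cent1E; apply/eqP/commute_lperm; first exact: lp_p; first exact: is_lperm_neg1.
exact/eqP/(allP comm_neg1).
Qed.

Lemma neg1_notin_WD5 : neg1 \notin WD5.
Proof. by rewrite WD5E mem_lperms ?is_lperm_Wlist //; vm_compute. Qed.

Lemma abelian_WD5_card (A : {group {perm 'I_10}}) :
  A \subset WD5 -> abelian A -> (#|A| <= 16)%N.
Proof.
move=> sAW cA; have sAC := subset_trans sAW WD5_cent_neg1.
have cAn : <[neg1]> \subset 'C(A) by rewrite cycle_subG -sub_cent1.
have tiAn : A :&: <[neg1]> = 1.
  rewrite setIC prime_TIg -?orderE ?order_neg1 // cycle_subG.
  by apply: contra neg1_notin_WD5; apply: (subsetP sAW).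
have cardAn : #|A <*> <[neg1]>| = (#|A| * 2)%N.
  by rewrite cent_joinEr // TI_cardMg // -orderE order_neg1.
have fixT b z : b \in A <*> <[neg1]> -> z \notin [set: 'I_10] -> b z = z by rewrite inE.
have := @card_abelian_cent_involution _ _ neg1_fixfree neg1K _ _ _ _ (fun z _ => in_setT _) fixT.
rewrite abelianY cA cycle_abelian cAn join_subG sAC cycle_subG cent1id cardAn cardsT card_ord.
move=> /(_ isT isT); rewrite (_ : 2 ^ 10 = (16 * 2) ^ 2)%N // leq_exp2r //.
by rewrite leq_pmul2r.
Qed.

Definition a0L : seq nat := [:: 0; 1; 8; 2; 9; 5; 6; 3; 7; 4]%N.
Definition b0L : seq nat := [:: 6; 0; 2; 3; 9; 1; 5; 7; 8; 4]%N.
Definition a0 : {perm 'I_10} := lperm a0L.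
Definition b0 : {perm 'I_10} := lperm b0L.
Definition M0 : {group {perm 'I_10}} := (<[a0]> <*> <[b0]>)%G.

Definition M0list : seq (seq nat) :=
  [seq lmul (lexp a0L i) (lexp b0L j) | i <- iota 0 4, j <- iota 0 4].

Lemma is_lperm_a0 : is_lperm a0L. Proof. by []. Qed.
Lemma is_lperm_b0 : is_lperm b0L. Proof. by []. Qed.
Lemma is_lperm_M0list : all is_lperm M0list. Proof. by vm_compute. Qed.

Lemma order4_lperm p : is_lperm p -> lexp p 4 = lid -> lexp p 2 != lid -> #[lperm p] = 4%N.
Proof.
move=> lp_p p4 p2; apply: (@order_pfactor _ _ 2 1) => //.
  by apply/eqP; rewrite lperm_eq1 // p4.
by rewrite lperm_eq1.
Qed.

Lemma order_a0 : #[a0] = 4%N. Proof. by apply: order4_lperm; vm_compute. Qed.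
Lemma order_b0 : #[b0] = 4%N. Proof. by apply: order4_lperm; vm_compute. Qed.

Lemma commute_a0b0 : commute a0 b0.
Proof. by apply: commute_lperm is_lperm_a0 is_lperm_b0 _; vm_compute. Qed.

Lemma cent_a0b0 : <[b0]> \subset 'C(<[a0]>).
Proof. by rewrite cent_cycle cycle_subG; apply/cent1P/commute_sym/commute_a0b0. Qed.

Lemma M0_mulg : M0 = <[a0]> * <[b0]> :> {set _}.
Proof. exact: cent_joinEr cent_a0b0. Qed.

Lemma lperms_M0list_sub : lperms M0list \subset M0.
Proof.
rewrite M0_mulg; apply/subsetP => _ /lpermsP[_ /allpairsP[[i j] [_ _ ->]] ->].
rewrite lpermM ?is_lperm_exp ?is_lperm_a0 ?is_lperm_b0 //.
by rewrite !lpermX ?is_lperm_a0 ?is_lperm_b0 // mem_mulg ?mem_cycle.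
Qed.

Lemma card_lperms_M0list : #|lperms M0list| = 16%N.
Proof. by rewrite card_lperms ?is_lperm_M0list //; vm_compute. Qed.

Lemma M0_dprod : <[a0]> \x <[b0]> = M0.
Proof.
rewrite dprodE ?M0_mulg ?cent_a0b0 //; apply: cardMg_TI.
rewrite -!orderE order_a0 order_b0 -M0_mulg.
by apply: leq_trans (subset_leq_card lperms_M0list_sub); rewrite card_lperms_M0list.
Qed.

Lemma card_M0 : #|M0| = 16%N.
Proof. by rewrite -(dprod_card M0_dprod) -!orderE order_a0 order_b0. Qed.

Lemma M0E : M0 = lperms M0list :> {set _}.
Proof.
by apply/eqP; rewrite eq_sym eqEcard lperms_M0list_sub card_M0 card_lperms_M0list.
Qed.

Lemma abelian_M0 : abelian M0.
Proof. by rewrite abelianY !cycle_abelian cent_a0b0. Qed.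

Lemma M0_sub_WD5 : M0 \subset WD5.
Proof.
by rewrite join_subG !cycle_subG WD5E !mem_lperms ?is_lperm_Wlist ?is_lperm_a0 ?is_lperm_b0.
Qed.

Lemma num_Z4_M0 : num_Z4 M0 = 2%N.
Proof.
have pM0 : 2.-group M0 by rewrite /pgroup card_M0.
have defM0 : \big[dprod/1]_(x <- [:: a0; b0]) <[x]> = M0.
  by rewrite !big_cons big_nil dprodg1 M0_dprod.
have n1 : 1 \notin [:: a0; b0].
  by rewrite !inE !(eq_sym 1) -!order_eq1 order_a0 order_b0.
rewrite /num_Z4 pcore_pgroup_id //.
by rewrite (seq.permP (abelian_type_pgroup pM0 defM0 n1)) /= order_a0 order_b0.
Qed.

Lemma mem_M0 p : is_lperm p -> (lperm p \in M0) = (p \in M0list).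
Proof. by move=> lp_p; rewrite M0E mem_lperms ?is_lperm_M0list. Qed.

Definition conj_into_M0 (p q g : seq nat) : bool :=
  (lmul p g \in map (lmul g) M0list) && (lmul q g \in map (lmul g) M0list).

Lemma conj_into_M0E p q g : is_lperm p -> is_lperm q -> is_lperm g ->
  conj_into_M0 p q g = (lperm p ^ lperm g \in M0) && (lperm q ^ lperm g \in M0).
Proof.
move=> lp_p lp_q lp_g.
have conjM0 r : is_lperm r -> (lperm r ^ lperm g \in M0) = (lmul r g \in map (lmul g) M0list).
  move=> lp_r; rewrite -mem_lcoset_lperms ?is_lperm_M0list ?is_lperm_mul // -M0E.
  by rewrite mem_lcoset lpermM // conjgE mulgA.
by rewrite !conjM0.
Qed.

Definition NM0list : seq (seq nat) := [seq g <- Wlist | conj_into_M0 a0L b0L g].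

Lemma normaliser_M0E : 'N_WD5(M0) = lperms NM0list :> {set _}.
Proof.
apply/setP => x; rewrite inE WD5E; apply/andP/lpermsP => [[/lpermsP[g gW ->] nM0g] | [g]].
  have lp_g := allP is_lperm_Wlist g gW.
  exists g; last by [].
  rewrite mem_filter gW andbT conj_into_M0E ?is_lperm_a0 ?is_lperm_b0 //.
  by move: nM0g; rewrite inE conjYg -!cycleJ join_subG !cycle_subG.
rewrite mem_filter => /andP[nM0g gW] ->; have lp_g := allP is_lperm_Wlist g gW.
split; first by rewrite mem_lperms ?is_lperm_Wlist.
rewrite conj_into_M0E ?is_lperm_a0 ?is_lperm_b0 // in nM0g.
by rewrite inE conjYg -!cycleJ join_subG !cycle_subG.
Qed.

Lemma is_lperm_NM0list : all is_lperm NM0list. Proof. by vm_compute. Qed.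

Lemma card_normaliser_M0 : #|'N_WD5(M0)| = 128%N.
Proof.
by rewrite normaliser_M0E card_lperms ?is_lperm_NM0list ?filter_uniq ?uniq_Wlist.
Qed.

Definition x0L : seq nat := [:: 3; 2; 0; 1; 4; 8; 7; 5; 6; 9]%N.
Definition y0L : seq nat := [:: 1; 0; 2; 3; 4; 6; 5; 7; 8; 9]%N.

Lemma normaliser_M0_quotient : 'N_WD5(M0) / M0 \isog 'D_8.
Proof.
have lp_x : is_lperm x0L by [].
have lp_y : is_lperm y0L by [].
have NM0 p : p \in NM0list -> lperm p \in 'N_WD5(M0).
  by move=> pN; rewrite normaliser_M0E mem_lperms ?(allP is_lperm_NM0list p pN) ?is_lperm_NM0list.
apply: (@quotient_isog_D8 _ _ _ (lperm x0L) (lperm y0L)).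
- by rewrite normal_subnorm M0_sub_WD5.
- by rewrite card_normaliser_M0 card_M0.
- by apply: NM0; vm_compute.
- by apply: NM0; vm_compute.
- by rewrite -lpermX // mem_M0 ?is_lperm_exp //; vm_compute.
- by rewrite -lpermX // mem_M0 ?is_lperm_exp //; vm_compute.
- by rewrite -lpermX // mem_M0 ?is_lperm_exp //; vm_compute.
- have -> : lperm x0L ^ lperm y0L * lperm x0L =
            (lperm y0L)^-1 * (lperm x0L * lperm y0L * lperm x0L) by rewrite conjgE !mulgA.
  rewrite -mem_lcoset -!lpermM ?is_lperm_mul // M0E.
  by rewrite mem_lcoset_lperms ?is_lperm_M0list ?is_lperm_mul //; vm_compute.
move=> i lt_i4; rewrite -lpermX // M0E mem_rcoset_lperms ?is_lperm_M0list ?is_lperm_exp //.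
by move: i lt_i4; do 4?case=> //; vm_compute.
Qed.

Definition order4_Wlist : seq (seq nat) :=
  [seq p <- Wlist | (lexp p 4 == lid) && (lexp p 2 != lid)].

(* Permutations of the five coordinates: each commuting pair of elements of
   order 4 with distinct squares is conjugated into M0 by one of them. *)
Definition conjugators : seq (seq nat) :=
  [:: [:: 0; 1; 2; 3; 4; 5; 6; 7; 8; 9]; [:: 0; 2; 1; 3; 4; 5; 7; 6; 8; 9];
      [:: 0; 1; 2; 4; 3; 5; 6; 7; 9; 8]; [:: 2; 0; 1; 3; 4; 7; 5; 6; 8; 9];
      [:: 0; 2; 1; 4; 3; 5; 7; 6; 9; 8]; [:: 0; 1; 4; 2; 3; 5; 6; 9; 7; 8];
      [:: 2; 0; 1; 4; 3; 7; 5; 6; 9; 8]; [:: 0; 4; 1; 2; 3; 5; 9; 6; 7; 8];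
      [:: 0; 2; 4; 1; 3; 5; 7; 9; 6; 8]; [:: 4; 0; 1; 2; 3; 9; 5; 6; 7; 8];
      [:: 2; 0; 4; 1; 3; 7; 5; 9; 6; 8]; [:: 0; 4; 2; 1; 3; 5; 9; 7; 6; 8];
      [:: 4; 0; 2; 1; 3; 9; 5; 7; 6; 8]; [:: 2; 4; 0; 1; 3; 7; 9; 5; 6; 8];
      [:: 4; 2; 0; 1; 3; 9; 7; 5; 6; 8]]%N.

Lemma conjugators_Wlist : all (mem Wlist) conjugators. Proof. by vm_compute. Qed.

(* The test is an [if] rather than an implication so that vm_compute only
   searches for conjugators when the guard holds. *)
Lemma order4_pairs_conj_M0 : let O := order4_Wlist in
  all (fun p => all (fun q =>
    if (lmul p q == lmul q p) && (lexp p 2 != lexp q 2) then has (conj_into_M0 p q) conjugators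
    else true) O) O.
Proof. by vm_compute. Qed.

Lemma mem_order4_Wlist p : p \in Wlist -> #[lperm p] = 4%N -> p \in order4_Wlist.
Proof.
move=> pW op; have lp_p := allP is_lperm_Wlist p pW.
by rewrite mem_filter pW andbT -!lperm_eq1 // -!order_dvdn op.
Qed.

Lemma commuting_order4_conj x y : x \in WD5 -> y \in WD5 -> #[x] = 4%N -> #[y] = 4%N ->
  commute x y -> x ^+ 2 != y ^+ 2 -> exists2 g, g \in WD5 & (x ^ g \in M0) && (y ^ g \in M0).
Proof.
rewrite WD5E => /lpermsP[p pW ->] /lpermsP[q qW ->] op oq cpq npq.
have [lp_p lp_q] := (allP is_lperm_Wlist p pW, allP is_lperm_Wlist q qW).
have := allP (allP order4_pairs_conj_M0 p (mem_order4_Wlist pW op)) q (mem_order4_Wlist qW oq).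
have -> : lmul p q == lmul q p.
  by apply/eqP/lperm_inj; [exact: is_lperm_mul | exact: is_lperm_mul | rewrite !lpermM].
have -> : lexp p 2 != lexp q 2.
  by apply: contra npq => /eqP epq; rewrite -!lpermX // epq eqxx.
case/hasP=> g gC; have gW := allP conjugators_Wlist g gC.
have lp_g := allP is_lperm_Wlist g gW.
rewrite conj_into_M0E // => conj_g; exists (lperm g) => //.
by rewrite mem_lperms ?is_lperm_Wlist.
Qed.

Lemma torus_WD5_Z4xZ4 (M : {group {perm 'I_10}}) : discrete_maximal_torus WD5 M ->
  exists x y, [/\ #[x] = 4%N, #[y] = 4%N & <[x]> \x <[y]> = M].
Proof.
case=> sMW cM maxM z4M; have cardM : #|M| = 16%N.
  by apply/eqP; rewrite eqn_leq abelian_WD5_card //= -card_M0 maxM ?M0_sub_WD5 ?abelian_M0.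
apply: (abelian_Z4xZ4_structure cM cardM).
by have := z4M _ M0_sub_WD5 abelian_M0; rewrite num_Z4_M0 card_M0 cardM; apply.
Qed.

Lemma Z4xZ4_conj_M0 (M : {group {perm 'I_10}}) x y : M \subset WD5 ->
  #[x] = 4%N -> #[y] = 4%N -> <[x]> \x <[y]> = M -> exists2 g, g \in WD5 & M :^ g = M0.
Proof.
move=> sMW ox oy defM; case/dprodP: (defM) => _ defxy cxy tixy.
have Mx : x \in M by rewrite -defxy (subsetP (mulG_subl _ _)) ?cycle_id.
have My : y \in M by rewrite -defxy (subsetP (mulG_subr _ _)) ?cycle_id.
have commxy : commute x y.
  by apply/commute_sym/cent1P; rewrite -cent_cycle (subsetP cxy) ?cycle_id.
have nxy : x ^+ 2 != y ^+ 2.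
  apply/eqP => exy; have : x ^+ 2 \in <[x]> :&: <[y]> by rewrite inE mem_cycle exy mem_cycle.
  by rewrite tixy inE -order_dvdn ox.
have [g Wg /andP[Mxg Myg]] :=
  commuting_order4_conj (subsetP sMW x Mx) (subsetP sMW y My) ox oy commxy nxy.
exists g => //; apply/eqP.
rewrite eqEcard cardJg -(dprod_card defM) -!orderE ox oy card_M0 leqnn andbT.
by rewrite -defxy conjsMg -!cycleJ mulG_subG !cycle_subG Mxg Myg.
Qed.

Theorem theorem4p2 (M : {group {perm 'I_10}}) :
  discrete_maximal_torus WD5 M -> 'N_WD5(M) / M \isog 'D_8.
Proof.
move=> torusM; have sMW : M \subset WD5 by case: torusM.
have [x [y [ox oy defM]]] := torus_WD5_Z4xZ4 torusM.
have [g Wg MgE] := Z4xZ4_conj_M0 sMW ox oy defM.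
have nsMN : M <| 'N_WD5(M) by rewrite normal_subnorm.
have NgE : 'N_WD5(M) :^ g = 'N_WD5(M0) by rewrite conjIg conjGid // -normJ MgE.
exact: isog_trans (quotient_conj_isog nsMN NgE MgE) normaliser_M0_quotient.
Qed.
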